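(* Let $k\ge1$, $n\ge 2k+1$ and $l\ge 2$. Then $\mathrm{ex}(J(n;k,k+1),C_{2l})\ge \binom{n}{k+1}=\frac{1}{k+1}e(J(n;k,k+1))$.
   Context: The doubled Johnson graph $J(n;k,k+1)$ is the bipartite graph with vertex set $\binom{[n]}{k}\cup\binom{[n]}{k+1}$ (subsets of $[n]$), where two vertices $u,v$ are adjacent iff $u\subset v$ or $v\subset u$. $\mathrm{ex}(G,H)$ is the maximum number of edges of a subgraph of $G$ containing no subgraph isomorphic to $H$; $C_m$ is the cycle of length $m$. *)

From mathcomp Require Import all_boot.
Set Implicit Arguments. Unset Strict Implicit. Unset Printing Implicit Defensive.

(* A simple graph on a finite vertex type V is given by its edge set:
   a set of 2-element subsets {u, v} of V. *)

(* F contains a cycle of length m (as a subgraph): there are m distinct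
   vertices f 0, ..., f (m-1) with {f i, f (i+1 mod m)} an edge of F for all i.
   Meaningful for m >= 3. *)
Definition has_cycle (V : finType) (F : {set {set V}}) (m : nat) : bool :=
  [exists f : {ffun 'I_m -> V},
     injectiveb f && [forall i : 'I_m, [set f i; f (ordS i)] \in F]].

Definition ex_cycle (V : finType) (G : {set {set V}}) (m : nat) : nat :=
  \max_(F : {set {set V}} | (F \subset G) && ~~ has_cycle F m) #|F|.

(* The doubled Johnson graph J(n;k,k+1): vertices are subsets of [n]
   (those of size k or k+1 are the only non-isolated ones; edges join a
   k-set u to a (k+1)-set v with u \subset v). *)
Definition doubled_johnson_edges (n k : nat) : {set {set {set 'I_n}}} :=
  [set e | [exists u : {set 'I_n}, exists v : {set 'I_n},
     [&& e == [set u; v], #|u| == k, #|v| == k.+1 & u \subset v]]].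

From mathcomp Require Import all_boot.
From mathcomp Require Import zify.
Set Implicit Arguments. Unset Strict Implicit.

(* Acyclicity: a graph in which every edge has an endpoint of degree one
   (a "pendant" endpoint) contains no cycle of length m >= 3, since every
   vertex on such a cycle has two distinct incident cycle edges.

   Witness: for every (k+1)-set v choose one element x of v and keep only
   the edge {v \ x, v}.  Each kept edge has v as a pendant endpoint, so the
   subgraph has no cycle, and distinct v give distinct edges, so it has
   C(n,k+1) edges.

   Edge count: the map (v, x) |-> {v \ x, v} is a bijection from the pairs
   (v, x) with #|v| = k+1 and x \in v onto the edges of J(n;k,k+1). *)

Lemma ordS_neq m (i : 'I_m) : 3 <= m -> ordS i != i /\ ordS (ordS i) != i.
Proof.
move=> Hm; have := ltn_ord i.
split; apply/eqP => /(congr1 val) /=.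
- have [lt_im|eq_im] : i.+1 < m \/ i.+1 = m by lia.
    by rewrite modn_small //; lia.
  by rewrite eq_im modnn; lia.
- have [lt_im|eq_im] : i.+1 < m \/ i.+1 = m by lia.
    2: by rewrite eq_im modnn modn_small; lia.
  rewrite (modn_small lt_im).
  have [lt2_im|eq2_im] : i.+2 < m \/ i.+2 = m by lia.
    by rewrite modn_small //; lia.
  by rewrite eq2_im modnn; lia.
Qed.

Lemma set2_cancel (T : finType) (a b v : T) :
  [set a; v] = [set v; b] -> a != v -> a = b.
Proof.
move=> E a_neq_v; have : a \in [set v; b] by rewrite -E !inE eqxx.
by rewrite !inE (negbTE a_neq_v) => /eqP.
Qed.

Definition pendant_edges (V : finType) (F : {set {set V}}) : Prop :=
  forall e, e \in F -> exists2 v, v \in e & forall e', e' \in F -> v \in e' -> e' = e.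

Lemma pendant_no_cycle (V : finType) (F : {set {set V}}) (m : nat) :
  3 <= m -> pendant_edges F -> ~~ has_cycle F m.
Proof.
move=> Hm pendF; apply/negP => /existsP[f /andP[/injectiveP f_inj /forallP f_edge]].
have i0 : 'I_m by exists 0; lia.
have [v v_in_e v_pend] := pendF _ (f_edge i0).
have [j f_j] : exists j, f j = v.
  by move: v_in_e; rewrite !inE => /orP[] /eqP ->; [exists i0 | exists (ordS i0)].
set p := ord_pred j; have Sp : ordS p = j by rewrite /p ord_predK.
(* both cycle edges at position j contain the pendant vertex v *)
have edge_j : [set f j; f (ordS j)] = [set f i0; f (ordS i0)].
  by apply: v_pend (f_edge j) _; rewrite -f_j !inE eqxx.
have edge_p : [set f p; f (ordS p)] = [set f i0; f (ordS i0)].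
  by apply: v_pend (f_edge p) _; rewrite Sp -f_j !inE eqxx orbT.
have same_edge : [set f p; f (ordS p)] = [set f j; f (ordS j)].
  by rewrite edge_p edge_j.
rewrite Sp in same_edge.
have fp_neq_fj : f p != f j.
  by rewrite -Sp (inj_eq f_inj) eq_sym; case: (ordS_neq p Hm).
have := set2_cancel same_edge fp_neq_fj; rewrite -Sp => /f_inj/esym/eqP.
by apply/negP; case: (ordS_neq p Hm).
Qed.

Lemma subset_succ_card (T : finType) (u v : {set T}) :
  u \subset v -> #|v| = #|u|.+1 -> exists2 x, x \in v & u = v :\ x.
Proof.
move=> sub_uv card_v.
have : 0 < #|v :\: u| by rewrite cardsD (setIidPr sub_uv) card_v subSnn.
case/card_gt0P => x; rewrite inE => /andP[x_notin_u x_in_v].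
exists x => //; apply/eqP; rewrite eqEcard; apply/andP; split.
  apply/subsetP => y y_in_u; rewrite !inE (subsetP sub_uv _ y_in_u) andbT.
  by apply: contraNneq x_notin_u => <-.
by move: (cardsD1 x v); rewrite x_in_v card_v => -[->].
Qed.

Lemma card_setD1_mem (T : finType) (v : {set T}) (x : T) (m : nat) :
  x \in v -> #|v| = m.+1 -> #|v :\ x| = m.
Proof. by move=> x_in_v card_v; move: (cardsD1 x v); rewrite x_in_v card_v => -[]. Qed.

Lemma mem_set2_setD1 (T : finType) (v w : {set T}) (x : T) :
  v \in [set w :\ x; w] -> #|v| = #|w| -> v = w.
Proof.
rewrite !inE => /orP[/eqP -> card_eq | /eqP //].
by apply/eqP; rewrite eqEcard subD1set card_eq leqnn.
Qed.

Section DoubledJohnson.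
Variables n k : nat.
Local Notation G := (doubled_johnson_edges n k).

Definition johnson_edge (p : {set 'I_n} * 'I_n) : {set {set 'I_n}} :=
  [set p.1 :\ p.2; p.1].

Definition flags : {set {set 'I_n} * 'I_n} :=
  [set p : {set 'I_n} * 'I_n | (#|p.1| == k.+1) && (p.2 \in p.1)].

(* There are C(n,k+1) choices of v and k+1 choices of x in each. *)
Lemma card_flags : #|flags| = 'C(n, k.+1) * k.+1.
Proof.
rewrite -sum1_card.
have -> : \sum_(p in flags) 1 =
    \sum_(p : {set 'I_n} * 'I_n | (#|p.1| == k.+1) && (p.2 \in p.1)) 1.
  by apply: eq_bigl => p; rewrite inE.
rewrite -(pair_big_dep (fun v : {set 'I_n} => #|v| == k.+1) (fun v x => x \in v)
  (fun _ _ => 1)) /=.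
rewrite (eq_bigr (fun _ => k.+1)) => [|v /eqP card_v]; last by rewrite sum1_card.
rewrite sum_nat_const; congr (_ * _).
by rewrite -[n in 'C(n, _)]card_ord -card_draws; apply: eq_card => v; rewrite inE.
Qed.

Lemma johnson_edgesE : G = johnson_edge @: flags.
Proof.
apply/setP => e; apply/idP/imsetP.
- rewrite inE => /existsP[u /existsP[v /and4P[/eqP -> /eqP card_u /eqP card_v sub_uv]]].
  have [x x_in_v ->] := subset_succ_card sub_uv (etrans card_v (congr1 _ (esym card_u))).
  by exists (v, x); rewrite // inE /= card_v eqxx x_in_v.
- case=> [[v x]]; rewrite inE /= => /andP[/eqP card_v x_in_v] ->.
  rewrite inE; apply/existsP; exists (v :\ x); apply/existsP; exists v.
  by rewrite eqxx (card_setD1_mem x_in_v card_v) card_v subD1set !eqxx.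
Qed.

(* A flag is recovered from its edge: v is the larger end, x the missing element. *)
Lemma johnson_edge_inj : {in flags &, injective johnson_edge}.
Proof.
move=> [v x] [w y]; rewrite !inE /= => /andP[/eqP card_v x_in_v] /andP[/eqP card_w _].
rewrite /johnson_edge /= => E.
have v_eq_w : v = w.
  apply: (mem_set2_setD1 (x := y)) (etrans card_v (esym card_w)).
  by rewrite -E !inE eqxx orbT.
subst w; congr (_, _).
have : v :\ x \in [set v :\ y; v] by rewrite -E !inE eqxx.
rewrite !inE => /orP[/eqP vx_eq_vy | /eqP vx_eq_v].
  by move: (setD11 x v); rewrite vx_eq_vy !inE x_in_v andbT => /negbFE/eqP.
by move: (card_setD1_mem x_in_v card_v); rewrite vx_eq_v card_v; lia.
Qed.

Lemma card_johnson_edges : #|G| = 'C(n, k.+1) * k.+1.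
Proof. by rewrite johnson_edgesE (card_in_imset johnson_edge_inj) card_flags. Qed.

Definition drop_one (v : {set 'I_n}) : {set 'I_n} :=
  if [pick x in v] is Some x then v :\ x else v.

Lemma drop_oneP (v : {set 'I_n}) :
  #|v| = k.+1 -> exists2 x, x \in v & drop_one v = v :\ x.
Proof.
rewrite /drop_one; case: pickP => [x x_in_v | v0 card_v]; first by exists x.
by move: card_v; rewrite (eq_card0 v0).
Qed.

Definition pendant_subgraph : {set {set {set 'I_n}}} :=
  [set [set drop_one v; v] | v in [set v : {set 'I_n} | #|v| == k.+1]].

Lemma pendant_subgraph_top (v w : {set 'I_n}) :
  #|v| = k.+1 -> #|w| = k.+1 -> v \in [set drop_one w; w] -> v = w.
Proof.
move=> card_v card_w; have [x _ ->] := drop_oneP card_w.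
by move/mem_set2_setD1; apply; rewrite card_v card_w.
Qed.

Lemma pendant_subgraph_sub : pendant_subgraph \subset G.
Proof.
rewrite johnson_edgesE; apply/subsetP => e /imsetP[v]; rewrite inE => /eqP card_v ->.
have [x x_in_v ->] := drop_oneP card_v.
by apply/imsetP; exists (v, x); rewrite // inE /= card_v eqxx x_in_v.
Qed.

Lemma card_pendant_subgraph : #|pendant_subgraph| = 'C(n, k.+1).
Proof.
rewrite card_in_imset; last first.
  move=> v w; rewrite !inE => /eqP card_v /eqP card_w E.
  by apply: pendant_subgraph_top card_v card_w _; rewrite -E !inE eqxx orbT.
by rewrite -[n in 'C(n, _)]card_ord -card_draws; apply: eq_card => v; rewrite inE.
Qed.

Lemma pendant_subgraph_pendant : pendant_edges pendant_subgraph.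
Proof.
move=> e /imsetP[v]; rewrite inE => /eqP card_v ->.
exists v; first by rewrite !inE eqxx orbT.
move=> e' /imsetP[w]; rewrite inE => /eqP card_w -> v_in_e.
by rewrite (pendant_subgraph_top card_v card_w v_in_e).
Qed.

End DoubledJohnson.

Theorem mainTheorem6 (k n l : nat) :
  1 <= k -> 2 * k + 1 <= n -> 2 <= l ->
  'C(n, k.+1) <= ex_cycle (doubled_johnson_edges n k) (2 * l) /\
  'C(n, k.+1) * k.+1 = #|doubled_johnson_edges n k|.
Proof.
move=> _ _ l_ge2; split; last by rewrite card_johnson_edges.
rewrite -(card_pendant_subgraph n k) /ex_cycle.
apply: (@leq_bigmax_cond _ (fun F : {set {set {set 'I_n}}} =>
  (F \subset doubled_johnson_edges n k) && ~~ has_cycle F (2 * l)) (fun F => #|F|)).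
rewrite pendant_subgraph_sub pendant_no_cycle //; first by lia.
exact: pendant_subgraph_pendant.
Qed.
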